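(* Let $\mathcal T$ consist of projective objects and let $f\in\mathcal A(X,Y)$ be an epimorphism in $\mathcal A$. The following are equivalent: (1) $\overline f$ is an epimorphism in $\underline{\mathcal A}$; (2) for every morphism $h:X\to T$ with $T\in\mathcal T$, there is a morphism $\tilde h:X\to h(\ker f)$ that coincides with $h$ on $\ker(f)$. If moreover $\mathcal T$ is covariantly finite, these are also equivalent to: (3) for every (equivalently, for some) $\mathcal T$-preenvelope $\mu^X:X\to T^X$, there is a morphism $\tilde\mu:X\to\mu^X(\ker f)$ that coincides with $\mu^X$ on $\ker(f)$.
   Context: $\mathcal A$ is abelian, $\mathcal T$ a full additive subcategory closed under finite direct sums and direct summands consisting of projective objects; $\underline{\mathcal A}=\mathcal A/\langle\mathcal T\rangle$ is the stable category and $\overline f$ the class of $f$. For a subobject $\kappa:K\hookrightarrow X$ and a morphism $h:X\to T$, $h(K)$ denotes the image of $h\kappa$, with canonical inclusion $j:h(K)\hookrightarrow T$; a morphism $\tilde h:X\to h(K)$ is said to coincide with $h$ on $K$ if $j\tilde h\kappa=h\kappa$. *)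

From mathcomp Require Import all_boot all_algebra.
Set Implicit Arguments. Unset Strict Implicit. Unset Printing Implicit Defensive.
Import GRing.Theory.
Local Open Scope ring_scope.

Record preadditive := Preadditive {
  obj :> Type;
  mor : obj -> obj -> zmodType;
  idm : forall X, mor X X;
  mcomp : forall X Y Z, mor Y Z -> mor X Y -> mor X Z;
  comp_assoc : forall X Y Z W (h : mor Z W) (g : mor Y Z) (f : mor X Y),
      mcomp h (mcomp g f) = mcomp (mcomp h g) f;
  comp_idl : forall X Y (f : mor X Y), mcomp (idm Y) f = f;
  comp_idr : forall X Y (f : mor X Y), mcomp f (idm X) = f;
  comp_addl : forall X Y Z (g1 g2 : mor Y Z) (f : mor X Y),
      mcomp (g1 + g2) f = mcomp g1 f + mcomp g2 f;
  comp_addr : forall X Y Z (g : mor Y Z) (f1 f2 : mor X Y),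
      mcomp g (f1 + f2) = mcomp g f1 + mcomp g f2
}.
Arguments mor {p}.
Arguments idm {p}.
Arguments mcomp {p X Y Z}.

Section PreDefs.
Variable C : preadditive.

Definition mono (X Y : C) (f : mor X Y) : Prop :=
  forall W (a b : mor W X), mcomp f a = mcomp f b -> a = b.
Definition epi (X Y : C) (f : mor X Y) : Prop :=
  forall W (a b : mor Y W), mcomp a f = mcomp b f -> a = b.

Definition is_kernel (X Y K : C) (f : mor X Y) (k : mor K X) : Prop :=
  mcomp f k = 0 /\
  forall W (g : mor W X), mcomp f g = 0 -> exists! u : mor W K, mcomp k u = g.
Definition is_cokernel (X Y Q : C) (f : mor X Y) (c : mor Y Q) : Prop :=
  mcomp c f = 0 /\
  forall W (g : mor Y W), mcomp g f = 0 -> exists! u : mor Q W, mcomp u c = g.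

Definition is_zero_obj (Z : C) : Prop := idm Z = 0.

Definition is_biproduct (X1 X2 S : C) (i1 : mor X1 S) (i2 : mor X2 S)
    (p1 : mor S X1) (p2 : mor S X2) : Prop :=
  [/\ mcomp p1 i1 = idm X1, mcomp p2 i2 = idm X2,
      mcomp p1 i2 = 0, mcomp p2 i1 = 0 &
      mcomp i1 p1 + mcomp i2 p2 = idm S].

Definition projective (P : C) : Prop :=
  forall (A B : C) (e : mor A B), epi e ->
    forall g : mor P B, exists h : mor P A, mcomp e h = g.
End PreDefs.

Record abelian := Abelian {
  pre :> preadditive;
  zero_exists : exists Z : pre, is_zero_obj Z;
  biprod_exists : forall X1 X2 : pre, exists (S : pre) (i1 : mor X1 S) (i2 : mor X2 S)
      (p1 : mor S X1) (p2 : mor S X2), is_biproduct i1 i2 p1 p2;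
  kerO : forall X Y : pre, mor X Y -> pre;
  kerm : forall (X Y : pre) (f : mor X Y), mor (kerO f) X;
  kerm_spec : forall (X Y : pre) (f : mor X Y), is_kernel f (kerm f);
  cokerO : forall X Y : pre, mor X Y -> pre;
  cokerm : forall (X Y : pre) (f : mor X Y), mor Y (cokerO f);
  cokerm_spec : forall (X Y : pre) (f : mor X Y), is_cokernel f (cokerm f);
  mono_is_kernel : forall (X Y : pre) (f : mor X Y), mono f -> is_kernel (cokerm f) f;
  epi_is_cokernel : forall (X Y : pre) (f : mor X Y), epi f -> is_cokernel (kerm f) f
}.
Arguments kerO {a X Y}.
Arguments kerm {a X Y}.
Arguments cokerO {a X Y}.
Arguments cokerm {a X Y}.

Section AbDefs.
Variable C : abelian.

Definition imO (X Y : C) (g : mor X Y) : C := kerO (cokerm g).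
Definition imm (X Y : C) (g : mor X Y) : mor (imO g) Y := kerm (cokerm g).

Variable Tm : C -> Prop.

(* T : full additive subcategory closed under finite direct sums and direct
   summands, consisting of projective objects. *)
Definition admissible : Prop :=
  [/\ exists Z : C, is_zero_obj Z /\ Tm Z,
      (forall (X1 X2 S : C) (i1 : mor X1 S) (i2 : mor X2 S) (p1 : mor S X1)
         (p2 : mor S X2), is_biproduct i1 i2 p1 p2 -> Tm X1 -> Tm X2 -> Tm S),
      (forall (X T : C) (i : mor X T) (p : mor T X),
         mcomp p i = idm X -> Tm T -> Tm X) &
      (forall T : C, Tm T -> projective T)].

Definition factors_T (A B : C) (u : mor A B) : Prop :=
  exists (T : C) (a : mor A T) (b : mor T B), Tm T /\ u = mcomp b a.

(* equality of classes in the stable category A / <T> *)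
Definition stable_eq (A B : C) (u v : mor A B) : Prop := factors_T (u - v).

Definition stable_epi (X Y : C) (f : mor X Y) : Prop :=
  forall (Z : C) (g1 g2 : mor Y Z),
    stable_eq (mcomp g1 f) (mcomp g2 f) -> stable_eq g1 g2.

(* ht : X -> h(K) coincides with h on the subobject k : K -> X *)
Definition coincides_on (X T K : C) (h : mor X T) (k : mor K X)
    (ht : mor X (imO (mcomp h k))) : Prop :=
  mcomp (imm (mcomp h k)) (mcomp ht k) = mcomp h k.

Definition preenvelope (X TX : C) (mu : mor X TX) : Prop :=
  Tm TX /\ forall (T : C) (h : mor X T), Tm T -> exists u : mor TX T, h = mcomp u mu.

Definition covariantly_finite : Prop :=
  forall X : C, exists (TX : C) (mu : mor X TX), preenvelope mu.
End AbDefs.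
Arguments coincides_on {C X T K} h k ht.

From mathcomp Require Import all_boot all_algebra.
Set Implicit Arguments. Unset Strict Implicit. Unset Printing Implicit Defensive.
Import GRing.Theory.
Local Open Scope ring_scope.

(* (1) => (2): let c be the cokernel of [h k], k = ker f.  Since [c h] kills
   [K] it factors as [g f], and [g f] factors through [T]; so [g] lies in <T>
   when [f] is stably epi, say [g = b a] through [T'].  Projectivity of [T']
   lifts [b] along the epimorphism [c] to [b'], and [h - b' a f] is killed by
   [c], hence lands in [h(K) = ker c]; it agrees with [h] on [K].
   (2) => (1): if [g f = b h] with [h : X -> T], then [b] kills [h k], hence
   kills [h(K)]; so [b h = b (h - h~)] where [h - h~] kills [K], i.e. equals
   [w f].  Cancelling the epimorphism [f] in [g f = b w f] gives [g = b w].
   For (3), every [h : X -> T] factors through a preenvelope [mu], so the same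
   argument applies with [mu] in place of [h]. *)

Section Preadditive.
Variable C : preadditive.

Lemma comp0l (X Y Z : C) (f : mor X Y) : mcomp (0 : mor Y Z) f = 0.
Proof.
have H := comp_addl (0 : mor Y Z) 0 f; rewrite addr0 in H.
by apply: (addrI (mcomp (0 : mor Y Z) f)); rewrite -H addr0.
Qed.

Lemma comp0r (X Y Z : C) (g : mor Y Z) : mcomp g (0 : mor X Y) = 0.
Proof.
have H := comp_addr g (0 : mor X Y) 0; rewrite addr0 in H.
by apply: (addrI (mcomp g (0 : mor X Y))); rewrite -H addr0.
Qed.

Lemma compNl (X Y Z : C) (g : mor Y Z) (f : mor X Y) : mcomp (- g) f = - mcomp g f.
Proof. by apply/eqP; rewrite -subr_eq0 opprK -comp_addl addNr comp0l. Qed.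

Lemma compNr (X Y Z : C) (g : mor Y Z) (f : mor X Y) : mcomp g (- f) = - mcomp g f.
Proof. by apply/eqP; rewrite -subr_eq0 opprK -comp_addr addNr comp0r. Qed.

Lemma compBl (X Y Z : C) (g1 g2 : mor Y Z) (f : mor X Y) :
  mcomp (g1 - g2) f = mcomp g1 f - mcomp g2 f.
Proof. by rewrite comp_addl compNl. Qed.

Lemma compBr (X Y Z : C) (g : mor Y Z) (f1 f2 : mor X Y) :
  mcomp g (f1 - f2) = mcomp g f1 - mcomp g f2.
Proof. by rewrite comp_addr compNr. Qed.

Lemma kernel_lift (X Y K W : C) (f : mor X Y) (k : mor K X) (g : mor W X) :
  is_kernel f k -> mcomp f g = 0 -> exists u, mcomp k u = g.
Proof. by move=> [_ Hk] fg0; have [u [ku _]] := Hk W g fg0; exists u. Qed.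

Lemma cokernel_desc (X Y Q W : C) (f : mor X Y) (c : mor Y Q) (g : mor Y W) :
  is_cokernel f c -> mcomp g f = 0 -> exists u, mcomp u c = g.
Proof. by move=> [_ Hc] gf0; have [u [uc _]] := Hc W g gf0; exists u. Qed.

Lemma cokernel_epi (X Y Q : C) (f : mor X Y) (c : mor Y Q) : is_cokernel f c -> epi c.
Proof.
move=> [cf0 Hc] W a b eab.
have acf0 : mcomp (mcomp a c) f = 0 by rewrite -comp_assoc cf0 comp0r.
have [u [_ uniq_u]] := Hc W _ acf0.
by rewrite -(uniq_u a erefl) (uniq_u b (esym eab)).
Qed.

End Preadditive.

Section Abelian.
Variable C : abelian.

Lemma comp_kerm_eq0 (X Y : C) (f : mor X Y) : mcomp f (kerm f) = 0.
Proof. by case: (kerm_spec f). Qed.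

Lemma comp_cokerm_eq0 (X Y : C) (f : mor X Y) : mcomp (cokerm f) f = 0.
Proof. by case: (cokerm_spec f). Qed.

Lemma comp_imm_eq0 (X Y Z : C) (g : mor X Y) (b : mor Y Z) :
  mcomp b g = 0 -> mcomp b (imm g) = 0.
Proof.
move=> bg0; have [u <-] := cokernel_desc (cokerm_spec g) bg0.
by rewrite -comp_assoc /imm comp_kerm_eq0 comp0r.
Qed.

Lemma epi_desc (X Y W : C) (f : mor X Y) (x : mor X W) :
  epi f -> mcomp x (kerm f) = 0 -> exists w, mcomp w f = x.
Proof. by move=> Hf; apply: cokernel_desc; apply: epi_is_cokernel. Qed.

Variable Tm : C -> Prop.

Lemma stable_epiP (X Y : C) (f : mor X Y) :
  stable_epi Tm f <->
  (forall (Z : C) (g : mor Y Z), factors_T Tm (mcomp g f) -> factors_T Tm g).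
Proof.
split=> [Hs Z g gfT | Hfac Z g1 g2].
- by rewrite -[g]subr0; apply: Hs; rewrite /stable_eq comp0l subr0.
- by rewrite /stable_eq -compBl; apply: Hfac.
Qed.

Section EpiKernel.
Variables (X Y : C) (f : mor X Y).
Hypothesis Hf : epi f.

Lemma factors_T_of_coincides (T : C) (h : mor X T)
    (ht : mor X (imO (mcomp h (kerm f)))) :
  Tm T -> coincides_on h (kerm f) ht ->
  forall (Z : C) (g : mor Y Z) (b : mor T Z), mcomp g f = mcomp b h ->
  factors_T Tm g.
Proof.
move=> HTT Hco Z g b gf_bh.
set i := imm (mcomp h (kerm f)).
have bi0 : mcomp b i = 0.
  by apply: comp_imm_eq0; rewrite comp_assoc -gf_bh -comp_assoc comp_kerm_eq0 comp0r.
have [w wf] : exists w, mcomp w f = h - mcomp i ht.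
  by apply: epi_desc => //; rewrite compBl -comp_assoc Hco subrr.
exists T, w, b; split => //; apply: Hf.
by rewrite -comp_assoc wf compBr comp_assoc bi0 comp0l subr0.
Qed.

Lemma coincides_of_stable_epi :
  (forall T : C, Tm T -> projective T) -> stable_epi Tm f ->
  forall (T : C) (h : mor X T), Tm T ->
  exists ht : mor X (imO (mcomp h (kerm f))), coincides_on h (kerm f) ht.
Proof.
move=> Tproj /stable_epiP Hs T h HTT.
set c := cokerm (mcomp h (kerm f)).
have [g gf] : exists g, mcomp g f = mcomp c h.
  by apply: epi_desc => //; rewrite -comp_assoc comp_cokerm_eq0.
have [T' [a [b [HT' gab]]]] : factors_T Tm g.
  by apply: Hs; exists T, h, c; split.
have [b' cb'] := Tproj T' HT' _ _ _ (cokernel_epi (cokerm_spec _)) b.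
have [ht iht] : exists ht, mcomp (imm (mcomp h (kerm f))) ht = h - mcomp (mcomp b' a) f.
  apply: kernel_lift; first exact: kerm_spec.
  by rewrite compBr !comp_assoc cb' -gab gf subrr.
exists ht; rewrite /coincides_on comp_assoc iht compBl -comp_assoc.
by rewrite comp_kerm_eq0 comp0r subr0.
Qed.

Lemma stable_epi_of_coincides :
  (forall (T : C) (h : mor X T), Tm T ->
   exists ht : mor X (imO (mcomp h (kerm f))), coincides_on h (kerm f) ht) ->
  stable_epi Tm f.
Proof.
move=> Hco; apply/stable_epiP => Z g [T [h [b [HTT gf_bh]]]].
have [ht Hht] := Hco T h HTT.
exact: factors_T_of_coincides HTT Hht _ _ _ gf_bh.
Qed.

Lemma stable_epi_of_preenvelope (TX : C) (mu : mor X TX) :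
  preenvelope Tm mu ->
  (exists mt : mor X (imO (mcomp mu (kerm f))), coincides_on mu (kerm f) mt) ->
  stable_epi Tm f.
Proof.
move=> [HTX Hpre] [mt Hmt]; apply/stable_epiP => Z g [T [h [b [HTT gf_bh]]]].
have [u hu] := Hpre T h HTT.
by apply: factors_T_of_coincides HTX Hmt _ _ (mcomp b u) _; rewrite gf_bh hu comp_assoc.
Qed.

End EpiKernel.
End Abelian.

Theorem proposition4p2 (C : abelian) (Tm : C -> Prop) (HT : admissible Tm)
    (X Y : C) (f : mor X Y) (Hf : epi f) :
  (stable_epi Tm f <->
     (forall (T : C) (h : mor X T), Tm T ->
        exists ht : mor X (imO (mcomp h (kerm f))), coincides_on h (kerm f) ht))
  /\
  (covariantly_finite Tm ->
     (stable_epi Tm f <->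
        (forall (TX : C) (mu : mor X TX), preenvelope Tm mu ->
           exists mt : mor X (imO (mcomp mu (kerm f))), coincides_on mu (kerm f) mt))
     /\
     (stable_epi Tm f <->
        (exists (TX : C) (mu : mor X TX), preenvelope Tm mu /\
           exists mt : mor X (imO (mcomp mu (kerm f))), coincides_on mu (kerm f) mt))).
Proof.
have [_ _ _ Tproj] := HT.
have one_two := coincides_of_stable_epi Hf Tproj.
split; first by split; [exact: one_two | exact: stable_epi_of_coincides].
move=> Hcf; have [TX [mu Hmu]] := Hcf X.
split; split.
- by move=> Hs TY nu [HTY _]; exact: one_two.
- by move=> H3; exact: stable_epi_of_preenvelope Hmu (H3 _ _ Hmu).
- by move=> Hs; exists TX, mu; split => //; case: Hmu => HTX _; exact: one_two.
- by move=> [TY [nu [Hnu H]]]; exact: stable_epi_of_preenvelope Hnu H.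
Qed.
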